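(* Let $X$ be a random vector in $\mathbb{R}^p$ with finite second moments and mean $\mu$, let $K\ge1$, $s>0$, and $\mathcal{W}=\{\mathbf{w}\in\mathbb{R}^p:\|\mathbf{w}\|_2^2\le1,\|\mathbf{w}\|_1\le s,w_j\ge0\ \forall j\}$. Then the map \[ (\mathbf{w},A)\mapsto \mathbb{E}\Bigl[\|X-\mu\|_{\mathbf{w}}^2-\min_{a\in A}\|X-a\|_{\mathbf{w}}^2\Bigr], \] defined for $\mathbf{w}\in\mathcal{W}$ and $A\subset\mathbb{R}^p$ with $\#A=K$, is continuous with respect to the metric $d((\mathbf{w}_1,A_1),(\mathbf{w}_2,A_2))=\max\{\|\mathbf{w}_1-\mathbf{w}_2\|,d_H(A_1,A_2)\}$, where $\|\cdot\|$ is the Euclidean norm and $d_H$ is the Hausdorff distance between subsets of $\mathbb{R}^p$ (with respect to the Euclidean metric).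
   Context: $\|\mathbf{x}\|_{\mathbf{w}}^2=\sum_{j=1}^p w_jx_j^2$. The Hausdorff distance is $d_H(A,B)=\max\{\sup_{x\in A}\inf_{y\in B}\|x-y\|,\ \sup_{y\in B}\inf_{x\in A}\|x-y\|\}$. *)

From HB Require Import structures.
From mathcomp Require Import all_boot all_order all_algebra.
From mathcomp Require Import all_classical all_reals all_analysis.
Set Implicit Arguments. Unset Strict Implicit. Unset Printing Implicit Defensive.
Import Order.TTheory GRing.Theory Num.Theory.
Local Open Scope classical_set_scope.
Local Open Scope ring_scope.

Definition enorm (R : realType) (p : nat) (v : 'rV[R]_p) : R :=
  Num.sqrt (\sum_(j < p) v 0 j ^+ 2).

Definition l1norm (R : realType) (p : nat) (v : 'rV[R]_p) : R :=
  \sum_(j < p) `|v 0 j|.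

Definition wnorm2 (R : realType) (p : nat) (w x : 'rV[R]_p) : R :=
  \sum_(j < p) w 0 j * x 0 j ^+ 2.

Definition Wset (R : realType) (p : nat) (s : R) : set 'rV[R]_p :=
  [set w : 'rV[R]_p | \sum_(j < p) w 0 j ^+ 2 <= 1 /\ l1norm w <= s /\
           forall j : 'I_p, 0 <= w 0 j].

Definition minover (R : realType) (T : Type) (A : set T) (f : T -> R) : R :=
  inf [set f a | a in A].

Definition hausdorff (R : realType) (p : nat) (A B : set 'rV[R]_p) : R :=
  Num.max (sup [set inf [set enorm (x - y) | y in B] | x in A])
          (sup [set inf [set enorm (x - y) | x in A] | y in B]).

Definition meanvec (d : measure_display) (T : measurableType d) (R : realType)
  (P : probability T R) (p : nat) (X : T -> 'rV[R]_p) : 'rV[R]_p :=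
  \row_(j < p) Rintegral P setT (fun t => X t 0 j).

Definition objective (d : measure_display) (T : measurableType d) (R : realType)
  (P : probability T R) (p : nat) (X : T -> 'rV[R]_p)
  (w : 'rV[R]_p) (A : set 'rV[R]_p) : R :=
  Rintegral P setT (fun t =>
    wnorm2 w (X t - meanvec P X) - minover A (fun a => wnorm2 w (X t - a))).

From HB Require Import structures.
From mathcomp Require Import all_boot all_order all_algebra.
From mathcomp Require Import all_classical all_reals all_analysis.
From mathcomp Require Import ring lra.

Set Implicit Arguments.
Unset Strict Implicit.
Unset Printing Implicit Defensive.

Import Order.TTheory GRing.Theory Num.Theory numFieldNormedType.Exports.
Local Open Scope classical_set_scope.
Local Open Scope ring_scope.
Local Open Scope card_scope.

(* Fix a sample point u and let F (w, A) := ||u - mu||_w^2 - min_(a in A) ||u - a||_w^2.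
   If the weights move by eta in Euclidean norm and the centres by eta in Hausdorff
   distance, every centre of either set has an eta-close partner in the other, so each
   weighted squared distance moves by at most 4 eta sum_j (u_j^2 + (M + 1)^2), where M
   bounds the coordinates of mu and of the reference centres; a minimum over two families
   matched in both directions moves by no more than the matching error.  Hence F moves by
   at most 8 eta sum_j (u_j^2 + (M + 1)^2), which is integrable since X has finite second
   moments, and integrating yields a modulus of continuity proportional to eta. *)

Section real_lemmas.
Context {R : realType}.

Lemma wsq_perturb (w w' u a b eta M : R) :
  `|w - w'| <= eta -> eta <= 1 -> 0 <= w' <= 1 -> `|a - b| <= eta -> `|b| <= M ->
  `|w * (u - a) ^+ 2 - w' * (u - b) ^+ 2| <= eta * (4 * (u ^+ 2 + (M + 1) ^+ 2)).
Proof.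
move=> hw eta1 /andP[w'0 w'1] hab hb.
have eta0 : 0 <= eta := le_trans (normr_ge0 _) hw.
have M0 : 0 <= M := le_trans (normr_ge0 _) hb.
have ha : `|a| <= M + 1.
  by rewrite -(subrK b a); apply: le_trans (ler_normD _ _) _; lra.
have -> : w * (u - a) ^+ 2 - w' * (u - b) ^+ 2 =
    (w - w') * (u - a) ^+ 2 + w' * ((b - a) * (2 * u - a - b)) by ring.
have h1 : `|(w - w') * (u - a) ^+ 2| <= eta * (2 * u ^+ 2 + 2 * (M + 1) ^+ 2).
  rewrite normrM (ger0_norm (sqr_ge0 _)); apply: ler_pM => //; first exact: sqr_ge0.
  have : a ^+ 2 <= (M + 1) ^+ 2.
    by rewrite -[a ^+ 2]real_normK ?num_real //; have := normr_ge0 a; nra.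
  have := sqr_ge0 (u + a); nra.
have h2 : `|w' * ((b - a) * (2 * u - a - b))| <= eta * (u ^+ 2 + 2 * (M + 1)).
  rewrite !normrM (ger0_norm w'0) mulrA.
  apply: ler_pM => //; first exact: mulr_ge0.
    by rewrite -[eta]mul1r distrC; apply: ler_pM.
  have hu : `|2 * u| <= u ^+ 2 + 1.
    rewrite normrM ger0_norm // -real_normK ?num_real //.
    have := sqr_ge0 (`|u| - 1); lra.
  have := ler_normB (2 * u) a; have := ler_normB (2 * u - a) b; lra.
apply: le_trans (ler_normD _ _) _; apply: le_trans (lerD h1 h2) _.
rewrite -mulrDr ler_wpM2l //; nra.
Qed.

Lemma inf_eq_lbound (S : set R) x : S x -> lbound S x -> inf S = x.
Proof.
move=> Sx lbx; apply/le_anti; rewrite lb_le_inf ?andbT //; last by exists x.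
by apply: ge_inf => //; exists x.
Qed.

Lemma finite_has_ubound (S : set R) : finite_set S -> has_ubound S.
Proof.
move=> fS; have [->|/set0P S0] := eqVneq S set0; first by exists 0.
by have [] := compact_has_sup S0 (finite_compact fS).
Qed.

Lemma inf_img_le_add (U V : Type) (A : set U) (B : set V) (f : U -> R) (g : V -> R)
    beta :
  B !=set0 -> has_lbound (f @` A) ->
  (forall b, B b -> exists2 a, A a & f a <= g b + beta) ->
  inf (f @` A) <= inf (g @` B) + beta.
Proof.
move=> B0 lbA hBA; rewrite -lerBlDr; apply: lb_le_inf; first exact: image_nonempty.
move=> _ [b Bb <-]; have [a Aa hab] := hBA b Bb.
by rewrite lerBlDr; apply: le_trans hab; apply: ge_inf => //; exists a.
Qed.

Lemma dist_inf_img_le (U V : Type) (A : set U) (B : set V) (f : U -> R) (g : V -> R)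
    beta :
  A !=set0 -> B !=set0 -> has_lbound (f @` A) -> has_lbound (g @` B) ->
  (forall a, A a -> exists2 b, B b & `|f a - g b| <= beta) ->
  (forall b, B b -> exists2 a, A a & `|f a - g b| <= beta) ->
  `|inf (f @` A) - inf (g @` B)| <= beta.
Proof.
move=> A0 B0 lbA lbB hAB hBA.
have le_fg : inf (f @` A) <= inf (g @` B) + beta.
  apply: inf_img_le_add => // b Bb; have [a Aa] := hBA b Bb.
  by rewrite ler_norml => /andP[_ ?]; exists a => //; lra.
have le_gf : inf (g @` B) <= inf (f @` A) + beta.
  apply: inf_img_le_add => // a Aa; have [b Bb] := hAB a Aa.
  by rewrite ler_norml => /andP[? _]; exists b => //; lra.
by rewrite ler_norml; apply/andP; split; lra.
Qed.

Lemma sup_inf_lt_match (U V : Type) (A : set U) (B : set V) (f : U -> V -> R) delta :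
  finite_set A -> B !=set0 ->
  sup [set inf [set f x y | y in B] | x in A] < delta ->
  forall x, A x -> exists2 y, B y & f x y < delta.
Proof.
move=> fA B0 hsup x Ax.
have /inf_lt [|_ [y By <-]] : inf [set f x y | y in B] < delta.
- apply: le_lt_trans hsup; apply: ub_le_sup; last by exists x.
  exact/finite_has_ubound/finite_image.
- exact: image_nonempty.
- by exists y.
Qed.

End real_lemmas.

Section vectors.
Context {R : realType} {p : nat}.
Implicit Types (u v w a b m : 'rV[R]_p) (A : set 'rV[R]_p).

Lemma coord_le_enorm v j : `|v 0 j| <= enorm v.
Proof.
rewrite /enorm -sqrtr_sqr ler_sqrt; last by rewrite sumr_ge0 // => i _; exact: sqr_ge0.
by rewrite (bigD1 j) //= lerDl sumr_ge0 // => i _; exact: sqr_ge0.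
Qed.

Lemma Wset_enorm_le1 (s : R) w : Wset s w -> enorm w <= 1.
Proof. by move=> [w1 _]; rewrite /enorm -sqrtr1 ler_sqrt. Qed.

Lemma finite_coord_bound A : finite_set A ->
  exists M, forall b, A b -> forall j, `|b 0 j| <= M.
Proof.
move=> /finite_compact /compact_bounded [M [_ hM]].
exists (M + 1) => b Ab j.
apply: le_trans (hM (M + 1) _ b Ab); last by rewrite ltrDl.
rewrite [X in _ <= X]mx_normrE; exact: (le_bigmax _ (fun ij => `|b ij.1 ij.2|) (0, j)).
Qed.

Lemma finite_coord_boundU1 A m : finite_set A ->
  exists M, (forall j, `|m 0 j| <= M) /\ (forall b, A b -> forall j, `|b 0 j| <= M).
Proof.
move=> fA; have [|M hM] := @finite_coord_bound (A `|` [set m]).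
  by rewrite finite_setU; split => //; exact: finite_set1.
by exists M; split => [|b Ab]; apply: hM; [right | left].
Qed.

Lemma wnorm2_ge0 w v : (forall j, 0 <= w 0 j) -> 0 <= wnorm2 w v.
Proof. by move=> w_ge0; apply: sumr_ge0 => j _; rewrite mulr_ge0 ?sqr_ge0. Qed.

Lemma wnorm20 v : wnorm2 0 v = 0.
Proof. by rewrite /wnorm2 big1 // => j _; rewrite mxE mul0r. Qed.

Lemma enorm0 : enorm (0 : 'rV[R]_p) = 0.
Proof. by rewrite /enorm big1 ?sqrtr0 // => j _; rewrite mxE expr0n. Qed.

Definition envelope (M : R) u : R := \sum_(j < p) (u 0 j ^+ 2 + (M + 1) ^+ 2).

Lemma envelope_ge0 M u : 0 <= envelope M u.
Proof. by apply: sumr_ge0 => j _; rewrite addr_ge0 ?sqr_ge0. Qed.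

Lemma wnorm2_perturb (eta M : R) w w' u a b :
  (forall j, `|w 0 j - w' 0 j| <= eta) -> eta <= 1 -> (forall j, 0 <= w' 0 j <= 1) ->
  (forall j, `|a 0 j - b 0 j| <= eta) -> (forall j, `|b 0 j| <= M) ->
  `|wnorm2 w (u - a) - wnorm2 w' (u - b)| <= eta * (4 * envelope M u).
Proof.
move=> hw eta1 w'01 hab hb; rewrite /wnorm2 -sumrB mulr_sumr mulr_sumr.
apply: le_trans (ler_norm_sum _ _ _) _; apply: ler_sum => j _.
by rewrite !mxE; apply: wsq_perturb.
Qed.

Definition objective_integrand w m A u : R :=
  wnorm2 w (u - m) - minover A (fun a => wnorm2 w (u - a)).

Lemma objective_integrand0 m A u : A !=set0 -> objective_integrand 0 m A u = 0.
Proof.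
move=> [a0 Aa0]; rewrite /objective_integrand /minover wnorm20 sub0r.
rewrite (@inf_eq_lbound _ _ 0) ?oppr0 //; first by exists a0; rewrite ?wnorm20.
by move=> _ [a _ <-]; rewrite wnorm20.
Qed.

Lemma objective_integrand_perturb (eta M : R) w w' m u A A' :
  eta <= 1 -> (forall j, 0 <= w 0 j) -> (forall j, 0 <= w' 0 j) -> enorm w' <= 1 ->
  enorm (w - w') <= eta -> (forall j, `|m 0 j| <= M) ->
  (forall b, A' b -> forall j, `|b 0 j| <= M) -> A !=set0 -> A' !=set0 ->
  (forall a, A a -> exists2 b, A' b & enorm (a - b) <= eta) ->
  (forall b, A' b -> exists2 a, A a & enorm (a - b) <= eta) ->
  `|objective_integrand w m A u - objective_integrand w' m A' u|
    <= eta * (8 * envelope M u).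
Proof.
move=> eta1 w_ge0 w'_ge0 w'_le1 hw hm hA' A0 A'0 hAA' hA'A.
have near_coord v v' : enorm (v - v') <= eta -> forall j, `|v 0 j - v' 0 j| <= eta.
  by move=> hv j; apply: le_trans hv; have := coord_le_enorm (v - v') j; rewrite !mxE.
have w'01 j : 0 <= w' 0 j <= 1.
  by rewrite w'_ge0; apply: le_trans w'_le1; apply: le_trans (coord_le_enorm _ j); exact: ler_norm.
have perturb a b : enorm (a - b) <= eta -> (forall j, `|b 0 j| <= M) ->
    `|wnorm2 w (u - a) - wnorm2 w' (u - b)| <= eta * (4 * envelope M u).
  by move=> hab hb; apply: wnorm2_perturb => //; exact: near_coord.
have lbound_wnorm2 w'' A'' : (forall j, 0 <= w'' 0 j) ->
    has_lbound [set wnorm2 w'' (u - a) | a in A''].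
  by move=> w''0; exists 0 => _ [a _ <-]; exact: wnorm2_ge0.
have hmean : `|wnorm2 w (u - m) - wnorm2 w' (u - m)| <= eta * (4 * envelope M u).
  by apply: perturb => //; rewrite subrr enorm0 (le_trans (sqrtr_ge0 _) hw).
have hmin : `|minover A (fun a => wnorm2 w (u - a)) - minover A' (fun a => wnorm2 w' (u - a))|
    <= eta * (4 * envelope M u).
  apply: dist_inf_img_le => //; [exact: lbound_wnorm2 | exact: lbound_wnorm2 | |].
  - by move=> a Aa; have [b A'b hab] := hAA' a Aa; exists b; last exact: perturb (hA' b A'b).
  - by move=> b A'b; have [a Aa hab] := hA'A b A'b; exists a; last exact: perturb (hA' b A'b).
rewrite /objective_integrand.
set x := wnorm2 w _; set x' := wnorm2 w' _; set y := minover A _; set y' := minover A' _.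
have -> : x - y - (x' - y') = (x - x') - (y - y') by ring.
apply: le_trans (ler_normB _ _) _; apply: le_trans (lerD hmean hmin) _; lra.
Qed.

Lemma hausdorff_lt_match (delta : R) A B :
  finite_set A -> finite_set B -> A !=set0 -> B !=set0 -> hausdorff A B < delta ->
  (forall a, A a -> exists2 b, B b & enorm (a - b) < delta) /\
  (forall b, B b -> exists2 a, A a & enorm (a - b) < delta).
Proof.
move=> fA fB A0 B0; rewrite /hausdorff gt_max => /andP[hAB hBA]; split.
- exact: sup_inf_lt_match hAB.
- exact: (@sup_inf_lt_match _ _ _ _ _ (fun b a => enorm (a - b))) hBA.
Qed.

End vectors.

Lemma minover_bigmin (R : realType) (V : eqType) (F : V -> R) (s : seq V) x0 :
  x0 \in s -> minover [set` s] F = \big[Num.min/F x0]_(a <- s) F a.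
Proof.
move=> s_x0; apply: inf_eq_lbound; last by move=> _ [a s_a <-]; exact: ge_bigmin_seq.
rewrite big_seq; elim/big_ind: _ => [|_ _ [a s_a <-] [b s_b <-]|a s_a].
- by exists x0.
- by case: leP => _; [exists a | exists b].
- by exists a.
Qed.

Lemma measurable_minover d (T : measurableType d) (R : realType) (V : eqType)
    (A : set V) (F : V -> T -> R) :
  finite_set A -> A !=set0 -> (forall a, measurable_fun setT (F a)) ->
  measurable_fun setT (fun t => minover A (F ^~ t)).
Proof.
move=> /finite_seqP[s ->] [x0 s_x0] mF.
under eq_fun => t do rewrite (minover_bigmin (F ^~ t) s_x0).
elim: s {s_x0} => [|b s IH].
  by under eq_fun => t do rewrite big_nil; exact: mF.
under eq_fun => t do rewrite big_cons.
exact: measurable_realfun.measurable_minr.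
Qed.

Lemma measurable_wnorm2 d (T : measurableType d) (R : realType) (p : nat)
    (X : T -> 'rV[R]_p) (w c : 'rV[R]_p) :
  (forall j, measurable_fun setT (fun t => X t 0 j)) ->
  measurable_fun setT (fun t => wnorm2 w (X t - c)).
Proof.
move=> mX; apply: measurable_sum => j; under eq_fun => t do rewrite !mxE.
apply: measurable_realfun.measurable_funM => //.
exact/measurable_realfun.measurable_funX/measurable_realfun.measurable_funB.
Qed.

Lemma card_I_finite_nonempty (T : Type) (A : set T) (K : nat) :
  (0 < K)%N -> A #= `I_K -> finite_set A /\ A !=set0.
Proof.
move=> K0 cA; split; first by exists K.
apply/set0P/negP => /eqP A0; move: cA; rewrite A0 => /card_esym.
by rewrite card_eq0 => /eqP/seteqP[/(_ 0%N K0)].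
Qed.

Section objective_continuity.
Context d (T : measurableType d) (R : realType) (P : probability T R) (p : nat).
Variable X : T -> 'rV[R]_p.
Hypothesis mX : forall j, measurable_fun setT (fun t => X t 0 j).
Hypothesis iX2 : forall j, P.-integrable setT (fun t => (X t 0 j ^+ 2)%:E).

Implicit Types (w : 'rV[R]_p) (A : set 'rV[R]_p).

Let mu := meanvec P X.

Lemma measurable_objective_integrand w m A : finite_set A -> A !=set0 ->
  measurable_fun setT (fun t => objective_integrand w m A (X t)).
Proof.
move=> fA A0; apply: measurable_realfun.measurable_funB; first exact: measurable_wnorm2.
apply: (measurable_minover (F := fun a t => wnorm2 w (X t - a))) => // a.
exact: measurable_wnorm2.
Qed.

Lemma integrable_envelope M : P.-integrable setT (EFin \o (fun t => envelope M (X t))).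
Proof.
apply: (eq_integrable _ (fun t => \sum_(j < p) (X t 0 j ^+ 2 + (M + 1) ^+ 2)%:E)) => //.
  by move=> t _; rewrite sumEFin.
apply: integrable_sum => // j _.
apply: (eq_integrable _ (fun t => (X t 0 j ^+ 2)%:E + ((M + 1) ^+ 2)%:E)%E) => //.
exact: integrableD _ (iX2 j) (finite_measure_integrable_cst _ _ _).
Qed.

Lemma integrable_objective_integrand w A :
  (forall j, 0 <= w 0 j) -> enorm w <= 1 -> finite_set A -> A !=set0 ->
  P.-integrable setT (EFin \o (fun t => objective_integrand w mu A (X t))).
Proof.
move=> w_ge0 w_le1 fA A0.
have [M [hm hA]] := finite_coord_boundU1 mu fA.
have i8 := integrableZl measurableT 8 (integrable_envelope M).
apply: (le_integrable measurableT _ _ i8).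
  exact/measurable_realfun.measurable_EFinP/measurable_objective_integrand.
(* Domination: compare with the zero weight, where the integrand vanishes. *)
move=> t _; rewrite lee_fin [X in _ <= X]ger0_norm ?mulr_ge0 ?envelope_ge0 //.
rewrite -(subr0 (objective_integrand _ _ _ _)) -(objective_integrand0 mu (X t) A0) -[8 * _]mul1r.
apply: objective_integrand_perturb => //.
- by move=> j; rewrite mxE.
- by rewrite enorm0.
- by rewrite subr0.
- by move=> a Aa; exists a; rewrite // subrr enorm0.
- by move=> b Ab; exists b; rewrite // subrr enorm0.
Qed.

Lemma objective_perturb (eta M : R) w w' A A' :
  eta <= 1 -> (forall j, 0 <= w 0 j) -> enorm w <= 1 ->
  (forall j, 0 <= w' 0 j) -> enorm w' <= 1 -> enorm (w - w') <= eta ->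
  finite_set A -> finite_set A' -> A !=set0 -> A' !=set0 ->
  (forall j, `|mu 0 j| <= M) -> (forall b, A' b -> forall j, `|b 0 j| <= M) ->
  (forall a, A a -> exists2 b, A' b & enorm (a - b) <= eta) ->
  (forall b, A' b -> exists2 a, A a & enorm (a - b) <= eta) ->
  `|objective P X w A - objective P X w' A'|
    <= eta * Rintegral P setT (fun t => 8 * envelope M (X t)).
Proof.
move=> eta1 w_ge0 w_le1 w'_ge0 w'_le1 hw fA fA' A0 A'0 hm hA' hAA' hA'A.
have iA := integrable_objective_integrand w_ge0 w_le1 fA A0.
have iA' := integrable_objective_integrand w'_ge0 w'_le1 fA' A'0.
have iD := integrableB measurableT iA iA'.
have i8 := integrableZl measurableT 8 (integrable_envelope M).
rewrite /objective -RintegralB // -RintegralZl //.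
apply: le_trans (le_normr_Rintegral measurableT iD) _.
apply: le_Rintegral => //; first exact: integrable_norm.
  exact: (integrableZl measurableT eta i8).
by move=> t _; apply: objective_integrand_perturb.
Qed.

End objective_continuity.

Theorem theorem2 (d : measure_display) (T : measurableType d) (R : realType)
  (P : probability T R) (p : nat) (X : T -> 'rV[R]_p)
  (K : nat) (s : R) :
  (forall j : 'I_p, measurable_fun setT (fun t => X t 0 j)) ->
  (forall j : 'I_p, P.-integrable setT (fun t => ((X t 0 j) ^+ 2)%:E)) ->
  (1 <= K)%N -> 0 < s ->
  forall (w0 : 'rV[R]_p) (A0 : set 'rV[R]_p),
    Wset s w0 -> A0 #= `I_K ->
    forall e : R, 0 < e -> exists2 delta : R, 0 < delta &
      forall (w : 'rV[R]_p) (A : set 'rV[R]_p),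
        Wset s w -> A #= `I_K ->
        Num.max (enorm (w - w0)) (hausdorff A A0) < delta ->
        `|objective P X w A - objective P X w0 A0| < e.
Proof.
(* Of W only 0 <= w and ||w|| <= 1 matter. *)
move=> mX iX K_gt0 _ w0 A0 Ww0 cA0 e e_gt0.
have [fA0 A0_neq0] := card_I_finite_nonempty K_gt0 cA0.
have [M [hm hA0]] := finite_coord_boundU1 (meanvec P X) fA0.
set C := Rintegral P setT (fun t => 8 * envelope M (X t)).
have C_ge0 : 0 <= C by apply: Rintegral_ge0 => t _; rewrite mulr_ge0 ?envelope_ge0.
pose delta := Num.min 1 (e / (C + 1)).
have delta_gt0 : 0 < delta by rewrite lt_min ltr01 divr_gt0 // ltr_wpDl.
exists delta => // w A Ww cA; rewrite gt_max => /andP[hw hH].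
have [fA A_neq0] := card_I_finite_nonempty K_gt0 cA.
have [hAA0 hA0A] := hausdorff_lt_match fA fA0 A_neq0 A0_neq0 hH.
have : `|objective P X w A - objective P X w0 A0| <= delta * C.
  apply: objective_perturb => //; first by rewrite ge_min lexx.
  - exact: Ww.2.2.
  - exact: Wset_enorm_le1 Ww.
  - exact: Ww0.2.2.
  - exact: Wset_enorm_le1 Ww0.
  - exact: ltW.
  - by move=> a /hAA0[b A0b /ltW]; exists b.
  - by move=> b /hA0A[a Aa /ltW]; exists a.
have : delta * (C + 1) <= e by rewrite -ler_pdivlMr ?ltr_wpDl // ge_min lexx orbT.
nra.
Qed.
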